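(* Let $\mathcal{C}\subset\mathbb{R}^N$ be a convex set, $p\in\mathcal{C}$ and $u\in\mathbb{R}^N$. Then the map $r\mapsto\|u\|_{\mathcal{C}}(p;r)$, $r>0$, is non-increasing, and $\limsup_{r\searrow0}\|u\|_{\mathcal{C}}(p;r)\le\|u\|$.
   Context: Local norm: for $p\in\mathcal{C}$, a vector $u$ and $r>0$, $\|u\|_{\mathcal{C}}(p;r)=\sup_{v\in\mathcal{C},\,\|v-p\|=r}\max\big(\langle u,v-p\rangle/r,\,0\big)$ if there exists $v\in\mathcal{C}$ with $\|v-p\|=r$, and $0$ otherwise. $\|\cdot\|$ is the Euclidean norm. *)

From HB Require Import structures.
From mathcomp Require Import all_boot all_order all_algebra.
From mathcomp Require Import all_classical all_reals all_analysis.
Set Implicit Arguments. Unset Strict Implicit. Unset Printing Implicit Defensive.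
Import Order.TTheory GRing.Theory Num.Theory.
Local Open Scope classical_set_scope.
Local Open Scope ring_scope.

Definition dotv (R : realType) (N : nat) (u v : 'rV[R]_N) : R :=
  \sum_(i < N) u ord0 i * v ord0 i.

Definition enorm (R : realType) (N : nat) (u : 'rV[R]_N) : R :=
  Num.sqrt (dotv u u).

Definition local_norm (R : realType) (N : nat) (C : set 'rV[R]_N)
    (u p : 'rV[R]_N) (r : R) : R :=
  if `[< exists v, C v /\ enorm (v - p) = r >] then
    sup [set x | exists v, [/\ C v, enorm (v - p) = r &
                  x = Num.max (dotv u (v - p) / r) 0]]
  else 0.

From HB Require Import structures.
From mathcomp Require Import all_boot all_order all_algebra.
From mathcomp Require Import all_classical all_reals all_analysis.
From mathcomp Require Import ring.
Import Order.TTheory GRing.Theory Num.Theory.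
Import numFieldTopology.Exports.
Local Open Scope classical_set_scope.
Local Open Scope ring_scope.

(* Shrinking the segment [p, v] by the factor r / s maps the points of C at
   distance s from p to points of C at distance r, and leaves the quotient
   <u, v - p> / |v - p| unchanged; hence every value of the supremum defining
   ||u||_C(p; s) is also a value of the one defining ||u||_C(p; r).  Each such
   value is at most |u| by Cauchy-Schwarz, which bounds the limsup. *)

Section dot_product.
Variables (R : realType) (N : nat).
Implicit Types u w : 'rV[R]_N.

Lemma dotvC u w : dotv u w = dotv w u.
Proof. by apply: eq_bigr => i _; rewrite mulrC. Qed.

Lemma dotvZr (k : R) u w : dotv u (k *: w) = k * dotv u w.
Proof. by rewrite /dotv mulr_sumr; apply: eq_bigr => i _; rewrite mxE mulrCA. Qed.

Lemma dotv0r u : dotv u 0 = 0.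
Proof. by apply: big1 => i _; rewrite mxE mulr0. Qed.

Lemma dotvv_ge0 w : 0 <= dotv w w.
Proof. by apply: sumr_ge0 => i _; rewrite -expr2 sqr_ge0. Qed.

Lemma dotvv_eq0 w : dotv w w = 0 -> w = 0.
Proof.
move=> /psumr_eq0P ww0; apply/rowP => i; rewrite mxE.
by apply/eqP; rewrite -sqrf_eq0 expr2 ww0 // => j _; rewrite -expr2 sqr_ge0.
Qed.

Lemma dotv_quadratic_ge0 u w (a b : R) :
  0 <= a ^+ 2 * dotv u u - 2 * a * b * dotv u w + b ^+ 2 * dotv w w.
Proof.
have -> : a ^+ 2 * dotv u u - 2 * a * b * dotv u w + b ^+ 2 * dotv w w
    = \sum_(i < N) (a * u ord0 i - b * w ord0 i) ^+ 2.
  rewrite /dotv !mulr_sumr -sumrN -!big_split /=.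
  by apply: eq_bigr => i _; ring.
by apply: sumr_ge0 => i _; rewrite sqr_ge0.
Qed.

Lemma dotv_sqr_le u w : dotv u w ^+ 2 <= dotv u u * dotv w w.
Proof.
have [/dotvv_eq0 ->|ww_neq0] := eqVneq (dotv w w) 0.
  by rewrite !dotv0r expr0n mulr0.
have ww_gt0 : 0 < dotv w w by rewrite lt_neqAle eq_sym ww_neq0 dotvv_ge0.
have := dotv_quadratic_ge0 u w (dotv w w) (dotv u w).
rewrite (_ : _ - _ + _ = dotv w w * (dotv u u * dotv w w - dotv u w ^+ 2));
  last by ring.
by rewrite pmulr_rge0 // subr_ge0.
Qed.

Lemma enorm_ge0 w : 0 <= enorm w.
Proof. exact: sqrtr_ge0. Qed.

Lemma enormZ (k : R) w : 0 <= k -> enorm (k *: w) = k * enorm w.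
Proof.
move=> k_ge0; rewrite /enorm dotvZr dotvC dotvZr mulrA -expr2.
by rewrite sqrtrM ?sqr_ge0 // sqrtr_sqr ger0_norm.
Qed.

Lemma dotv_le_enorm u w : dotv u w <= enorm u * enorm w.
Proof.
rewrite /enorm -sqrtrM ?dotvv_ge0 //; apply: le_trans (ler_norm _) _.
by rewrite -sqrtr_sqr ler_sqrt ?dotv_sqr_le // mulr_ge0 ?dotvv_ge0.
Qed.

(* For [w = 0] the quotient is [0] since [0^-1 = 0]. *)
Lemma dotv_div_enorm_le u w : dotv u w / enorm w <= enorm u.
Proof.
have [->|w_neq0] := eqVneq (enorm w) 0; first by rewrite invr0 mulr0 enorm_ge0.
have w_gt0 : 0 < enorm w by rewrite lt_neqAle eq_sym w_neq0 enorm_ge0.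
by rewrite ler_pdivrMr // dotv_le_enorm.
Qed.

End dot_product.

Lemma convex_set_shrink (R : numDomainType) (M : lmodType R) (A : set M)
    (p v : M) (t : R) :
  convex_set A -> A p -> A v -> 0 <= t <= 1 -> A (p + t *: (v - p)).
Proof.
move=> A_convex Ap Av /andP[t_ge0 t_le1].
have := A_convex v p (Itv01 t_ge0 t_le1) (mem_set Av) (mem_set Ap).
rewrite inE /conv /= /unstable.onem scalerBl scale1r scalerBr.
by rewrite addrCA addrA.
Qed.

Lemma limf_esup_le (T : choiceType) (X : filteredType T) (R : realType)
    (f : X -> \bar R) (F : set_system X) (x : \bar R) :
  F setT -> (forall t, (f t <= x)%E) -> (limf_esup f F <= x)%E.
Proof.
move=> FT f_le; apply: (@le_trans _ _ (ereal_sup (f @` setT))).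
  by apply: ereal_inf_lbound; exists setT.
by apply: ge_ereal_sup => _ [t _ <-]; exact: f_le.
Qed.

Section local_norm.
Variables (R : realType) (N : nat) (C : set 'rV[R]_N) (u p : 'rV[R]_N).

Definition local_norm_set (r : R) : set R :=
  [set x | exists v, [/\ C v, enorm (v - p) = r &
                        x = Num.max (dotv u (v - p) / r) 0]].

Lemma local_normE r : local_norm C u p r = sup (local_norm_set r).
Proof.
rewrite /local_norm; case: asboolP => // no_point.
rewrite (_ : local_norm_set r = set0) ?sup0 //.
by apply/seteqP; split=> // x [v [Cv vr _]]; apply: no_point; exists v.
Qed.

Lemma local_norm_set_ub r : ubound (local_norm_set r) (enorm u).
Proof. by move=> _ [v [_ <- ->]]; rewrite ge_max dotv_div_enorm_le enorm_ge0. Qed.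

Lemma local_norm_set_has_sup r :
  local_norm_set r !=set0 -> has_sup (local_norm_set r).
Proof. by split=> //; exists (enorm u); exact: local_norm_set_ub. Qed.

Lemma local_norm_ge0 r : 0 <= local_norm C u p r.
Proof.
rewrite local_normE; have [->|/set0P S_neq0] := eqVneq (local_norm_set r) set0.
  by rewrite sup0.
have [x Sx] := S_neq0.
have x_ge0 : 0 <= x by case: Sx => v [_ _ ->]; rewrite le_max lexx orbT.
by apply/(le_trans x_ge0)/ub_le_sup => //; case: (local_norm_set_has_sup _ S_neq0).
Qed.

Lemma local_norm_le_enorm r : local_norm C u p r <= enorm u.
Proof.
rewrite local_normE; have [->|/set0P S_neq0] := eqVneq (local_norm_set r) set0.
  by rewrite sup0 enorm_ge0.
by apply: ge_sup => //; exact: local_norm_set_ub.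
Qed.

Hypotheses (C_convex : convex_set C) (Cp : C p).

Lemma local_norm_set_shrink r s :
  0 < r -> r <= s -> local_norm_set s `<=` local_norm_set r.
Proof.
move=> r_gt0 r_le_s _ [v [Cv vs ->]].
have s_gt0 : 0 < s := lt_le_trans r_gt0 r_le_s.
have t_ge0 : 0 <= r / s by rewrite divr_ge0 // ltW.
have t_le1 : r / s <= 1 by rewrite ler_pdivrMr // mul1r.
have wp : p + (r / s) *: (v - p) - p = (r / s) *: (v - p) by rewrite addrC addKr.
exists (p + (r / s) *: (v - p)); rewrite wp; split.
- by apply: convex_set_shrink; rewrite ?t_ge0.
- by rewrite enormZ // vs divfK // gt_eqF.
- by rewrite dotvZr; congr Num.max; field; rewrite !gt_eqF.
Qed.

Lemma local_norm_nonincreasing r s :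
  0 < r -> r <= s -> local_norm C u p s <= local_norm C u p r.
Proof.
move=> r_gt0 r_le_s; have shrink := @local_norm_set_shrink r s r_gt0 r_le_s.
have [S_s0|/set0P S_s_neq0] := eqVneq (local_norm_set s) set0.
  by rewrite local_normE S_s0 sup0 local_norm_ge0.
have S_r_neq0 : local_norm_set r !=set0.
  by have [x /shrink S_r_x] := S_s_neq0; exists x.
rewrite !local_normE; apply: sup_le => //.
- by move=> x /shrink; exact: le_down.
- exact: local_norm_set_has_sup.
Qed.

End local_norm.

Theorem lemma2p4 (R : realType) (N : nat) (C : set 'rV[R]_N)
    (p u : 'rV[R]_N) :
  convex_set C -> C p ->
  (forall r s : R, 0 < r -> r <= s ->
     local_norm C u p s <= local_norm C u p r) /\
  (limf_esup (fun r : R => (local_norm C u p r)%:E) (0%R)^'+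
     <= (enorm u)%:E)%E.
Proof.
move=> C_convex Cp; split; first exact: local_norm_nonincreasing.
apply: limf_esup_le => [|r]; first exact: filterT.
by rewrite lee_fin local_norm_le_enorm.
Qed.
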